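(* Let $C$ be an $(n,k)$ linear code over $H(\mathbb{Z})_{2+e_1}$. If $C$ corrects all errors of Lipschitz weight $2$ or less, then $(5^2)^{n-k}\ge 32n^2-8n+1$.
   Context: $H(\mathbb{Z})=\{a_0+a_1e_1+a_2e_2+a_3e_3:a_i\in\mathbb{Z}\}$ (Lipschitz integers) with quaternion multiplication $e_1^2=e_2^2=e_3^2=-1$, $e_1e_2=-e_2e_1=e_3$, $e_3e_1=-e_1e_3=e_2$, $e_2e_3=-e_3e_2=e_1$; $N(q)=a_0^2+a_1^2+a_2^2+a_3^2$. Right congruence: $q_1\equiv_r q_2 \pmod\pi$ iff $q_1-q_2=\delta\pi$ for some $\delta\in H(\mathbb{Z})$; $H(\mathbb{Z})_\pi=H(\mathbb{Z})/H(\mathbb{Z})\pi$, which has $N(\pi)^2$ elements (here $N(2+e_1)=5$). The Lipschitz weight of a class $\gamma$ is $\min\{|a_0|+|a_1|+|a_2|+|a_3| : a_0+a_1e_1+a_2e_2+a_3e_3\in\gamma\}$; the weight of a vector is the sum of the weights of its components. An $(n,k)$ linear code over $H(\mathbb{Z})_\pi$ is an additive subgroup $C\subseteq H(\mathbb{Z})_\pi^n$ such that $H(\mathbb{Z})_\pi^n/C$ has exactly $(N(\pi)^2)^{n-k}$ cosets. $C$ corrects all errors of weight $t$ or less if all vectors of Lipschitz weight at most $t$ lie in pairwise distinct cosets of $C$. *)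

From HB Require Import structures.
From mathcomp Require Import all_boot all_order all_algebra.
Set Implicit Arguments. Unset Strict Implicit. Unset Printing Implicit Defensive.
Import Order.TTheory GRing.Theory Num.Theory.

(* Lipschitz integers a0 + a1 e1 + a2 e2 + a3 e3 with a_i in Z. *)
Record quat := Quat { q0 : int; q1 : int; q2 : int; q3 : int }.

Local Open Scope ring_scope.

Definition qzero : quat := Quat 0 0 0 0.
Definition qadd (a b : quat) : quat :=
  Quat (q0 a + q0 b) (q1 a + q1 b) (q2 a + q2 b) (q3 a + q3 b).
Definition qopp (a : quat) : quat := Quat (- q0 a) (- q1 a) (- q2 a) (- q3 a).
Definition qsub (a b : quat) : quat := qadd a (qopp b).
(* Hamilton product: e1^2=e2^2=e3^2=-1, e1e2=e3, e2e3=e1, e3e1=e2. *)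
Definition qmul (a b : quat) : quat :=
  Quat (q0 a * q0 b - q1 a * q1 b - q2 a * q2 b - q3 a * q3 b)
       (q0 a * q1 b + q1 a * q0 b + q2 a * q3 b - q3 a * q2 b)
       (q0 a * q2 b - q1 a * q3 b + q2 a * q0 b + q3 a * q1 b)
       (q0 a * q3 b + q1 a * q2 b - q2 a * q1 b + q3 a * q0 b).

Definition qnorm (a : quat) : nat :=
  (`|q0 a| ^ 2 + `|q1 a| ^ 2 + `|q2 a| ^ 2 + `|q3 a| ^ 2)%N.

Definition norm1 (a : quat) : nat := (`|q0 a| + `|q1 a| + `|q2 a| + `|q3 a|)%N.

Definition pi21 : quat := Quat 2 1 0 0.

(* Right congruence modulo pi: x == y iff x - y = delta * pi. Elements of
   H(Z)_pi are represented by Lipschitz integers up to this congruence. *)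
Definition rcong (pi x y : quat) : Prop := exists d : quat, qsub x y = qmul d pi.

(* Vectors in H(Z)_pi^n, represented componentwise by Lipschitz integers. *)
Definition qvec (n : nat) := 'I_n -> quat.
Definition vzero n : qvec n := fun _ => qzero.
Definition vadd n (u v : qvec n) : qvec n := fun i => qadd (u i) (v i).
Definition vopp n (u : qvec n) : qvec n := fun i => qopp (u i).
Definition vsub n (u v : qvec n) : qvec n := fun i => qsub (u i) (v i).
Definition vcong (pi : quat) n (u v : qvec n) : Prop := forall i, rcong pi (u i) (v i).

(* w is the Lipschitz weight of the class of q in H(Z)_pi:
   the minimum of norm1 over the class. *)
Definition class_weight (pi q : quat) (w : nat) : Prop :=
  (exists r, rcong pi r q /\ norm1 r = w) /\
  (forall r, rcong pi r q -> (w <= norm1 r)%N).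

Definition vec_weight (pi : quat) n (u : qvec n) (w : nat) : Prop :=
  exists ws : 'I_n -> nat, (forall i, class_weight pi (u i) (ws i)) /\
                          w = (\sum_(i < n) ws i)%N.

(* A subset C of H(Z)_pi^n, given by a predicate on representatives that
   respects the congruence (so it is a genuine subset of the quotient). *)
Definition well_defined_subset (pi : quat) n (C : qvec n -> Prop) : Prop :=
  forall u v, vcong pi u v -> (C u <-> C v).

Definition additive_subgroup n (C : qvec n -> Prop) : Prop :=
  [/\ C (@vzero n), (forall u v, C u -> C v -> C (vadd u v))
    & (forall u, C u -> C (vopp u))].

Definition num_cosets n (C : qvec n -> Prop) (N : nat) : Prop :=
  exists r : 'I_N -> qvec n,
    (forall i j, C (vsub (r i) (r j)) -> i = j) /\
    (forall u, exists i, C (vsub u (r i))).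

Definition linear_code (pi : quat) (n k : nat) (C : qvec n -> Prop) : Prop :=
  [/\ (k <= n)%N, well_defined_subset pi C, additive_subgroup C
    & num_cosets C ((qnorm pi ^ 2) ^ (n - k))%N].

Arguments linear_code pi n k C : clear implicits.

Definition corrects (pi : quat) n (C : qvec n -> Prop) (t : nat) : Prop :=
  forall u v wu wv, vec_weight pi u wu -> vec_weight pi v wv ->
    (wu <= t)%N -> (wv <= t)%N -> C (vsub u v) -> vcong pi u v.

From mathcomp Require Import all_boot all_order all_algebra ring zify.
From Stdlib Require Import Classical ClassicalEpsilon.
Local Open Scope ring_scope.

(* The argument is a Hamming-type count.  First, for an arbitrary modulus,
   every class and every vector has a Lipschitz weight bounded by the
   norm1 of any representative, and an additive subgroup C with N cosets
   can separate at most N vectors (one per coset); if C corrects t errors,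
   distinct classes of weight <= t lie in distinct cosets, so any family of
   pairwise non-congruent vectors of weight <= t has at most N members
   ([sphere_packing]).
   Second, for pi = 2 + e1 (norm 5) we exhibit 25 pairwise non-congruent
   representatives: 0, the 8 units +-1, +-e_i of weight 1, and 16 elements
   of weight 2; non-congruence is decided by computation, using that
   x == y (mod pi) forces 5 to divide every coordinate of (x - y) * conj pi.
   Third, the vectors of weight <= 2 built from these representatives are
   the zero vector, n * 24 vectors with one nonzero coordinate and
   C(n,2) * 8 * 8 vectors with two unit coordinates, i.e.
   1 + 24 n + 32 n (n - 1) = 32 n^2 - 8 n + 1 of them; the theorem is the
   sphere-packing bound for this family. *)

Section AnyModulus.

Context {modulus : quat}.

Lemma rcong_refl (x : quat) : rcong modulus x x.
Proof.
exists qzero; case: x => a b c d.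
by rewrite /qsub /qadd /qopp /qmul /=; congr Quat; ring.
Qed.

Lemma least_nat (P : nat -> Prop) (m : nat) :
  P m -> exists w, P w /\ forall k, P k -> (w <= k)%N.
Proof.
elim: m {-2}m (leqnn m) => [|N IH] m le_mN Pm.
  by exists m; split=> // k _; move: le_mN; rewrite leqn0 => /eqP ->.
case: (classic (exists k, P k /\ (k < m)%N)) => [[k [Pk lt_km]]|no_smaller].
  by apply: (IH k) => //; lia.
exists m; split=> // k Pk; case: (leqP m k) => // lt_km.
by exfalso; apply: no_smaller; exists k.
Qed.

Lemma class_weight_exists (q : quat) :
  exists w, class_weight modulus q w /\ (w <= norm1 q)%N.
Proof.
have [w [[r [rq <-]] w_min]] :=
  @least_nat (fun w => exists r, rcong modulus r q /\ norm1 r = w) (norm1 q)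
    (ex_intro _ q (conj (rcong_refl q) erefl)).
exists (norm1 r); split.
  by split; [exists r | move=> r' r'q; apply: w_min; exists r'].
by apply: w_min; exists q; split=> //; apply: rcong_refl.
Qed.

Lemma vec_weight_exists {n : nat} (u : qvec n) :
  exists w, vec_weight modulus u w /\ (w <= \sum_(i < n) norm1 (u i))%N.
Proof.
have [ws ws_ok] := ClassicalEpsilon.choice _ (fun i => class_weight_exists (u i)).
exists (\sum_(i < n) ws i)%N; split.
  by exists ws; split=> // i; case: (ws_ok i).
by apply: leq_sum => i _; case: (ws_ok i).
Qed.

Context {n N t : nat} {C : qvec n -> Prop}.
Hypotheses (C_wd : well_defined_subset modulus C) (C_grp : additive_subgroup C).
Hypotheses (C_cosets : num_cosets C N) (C_corr : corrects modulus C t).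

Lemma same_coset {u v r : qvec n} :
  C (vsub u r) -> C (vsub v r) -> C (vsub u v).
Proof.
case: C_grp => _ C_add C_opp Cur Cvr.
apply: (proj1 (C_wd (vadd (vsub u r) (vopp (vsub v r))) _ _)).
  move=> i; exists qzero; rewrite /vadd /vsub /vopp.
  move: (u i) (v i) (r i) => [? ? ? ?] [? ? ? ?] [? ? ? ?].
  by rewrite /qsub /qadd /qopp /qmul /=; congr Quat; ring.
exact: C_add (C_opp _ Cvr).
Qed.

Lemma sphere_packing {X : finType} (e : X -> qvec n) :
  (forall x, (\sum_(i < n) norm1 (e x i) <= t)%N) ->
  (forall x y, vcong modulus (e x) (e y) -> x = y) ->
  (#|X| <= N)%N.
Proof.
move=> e_light e_sep; case: C_cosets => rep [_ rep_onto].
have [f f_coset] := ClassicalEpsilon.choice _ (fun x => rep_onto (e x)).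
have f_inj : injective f.
  move=> x y fxy; apply: e_sep.
  have [wx [wt_x le_wx]] := vec_weight_exists (e x).
  have [wy [wt_y le_wy]] := vec_weight_exists (e y).
  apply: C_corr wt_x wt_y (leq_trans le_wx (e_light x))
    (leq_trans le_wy (e_light y)) _.
  by apply: (same_coset (f_coset x)); rewrite fxy.
by have := leq_card f f_inj; rewrite card_ord.
Qed.

End AnyModulus.

(* The conjugate of pi21; pi21 * pibar = 5. *)
Definition pibar : quat := Quat 2 (-1) 0 0.

(* Decidable necessary condition for x == y (mod pi21): all coordinates of
   (x - y) * pibar are divisible by 5. *)
Definition cong_mod5 (x y : quat) : bool :=
  let z := qmul (qsub x y) pibar in
  [&& (5 %| `|q0 z|)%N, (5 %| `|q1 z|)%N, (5 %| `|q2 z|)%N & (5 %| `|q3 z|)%N].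

Lemma rcong_mod5 (x y : quat) : rcong pi21 x y -> cong_mod5 x y.
Proof.
case=> d xy; rewrite /cong_mod5 xy.
have -> : qmul (qmul d pi21) pibar = Quat (5 * q0 d) (5 * q1 d) (5 * q2 d) (5 * q3 d).
  by case: d {xy} => a b c f; rewrite /qmul /=; congr Quat; ring.
by rewrite /= !abszM !dvdn_mulr.
Qed.

(* Representatives: 0, then the 8 units of weight 1, then 16 of weight 2. *)
Definition reps : seq quat :=
 [:: Quat 0 0 0 0; Quat 1 0 0 0; Quat (-1) 0 0 0; Quat 0 1 0 0; Quat 0 (-1) 0 0;
     Quat 0 0 1 0; Quat 0 0 (-1) 0; Quat 0 0 0 1; Quat 0 0 0 (-1);
     Quat (-1) 0 (-1) 0; Quat (-1) 0 0 (-1); Quat (-1) 0 0 1; Quat (-1) 0 1 0;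
     Quat 0 (-1) (-1) 0; Quat 0 (-1) 0 (-1); Quat 0 (-1) 0 1; Quat 0 (-1) 1 0;
     Quat 0 1 (-1) 0; Quat 0 1 0 (-1); Quat 0 1 0 1; Quat 0 1 1 0;
     Quat 1 0 (-1) 0; Quat 1 0 0 (-1); Quat 1 0 0 1; Quat 1 0 1 0].

Definition rep (a : nat) : quat := nth qzero reps a.

Lemma reps_separated :
  all (fun a => all (fun b => cong_mod5 (rep a) (rep b) ==> (a == b))
    (iota 0 25)) (iota 0 25).
Proof. by vm_compute. Qed.

Lemma rep_inj (a b : nat) :
  (a < 25)%N -> (b < 25)%N -> rcong pi21 (rep a) (rep b) -> a = b.
Proof.
move=> a25 b25 /rcong_mod5 ab.
move: reps_separated => /allP /(_ a); rewrite mem_iota add0n => /(_ a25).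
by move=> /allP /(_ b); rewrite mem_iota add0n => /(_ b25) /implyP /(_ ab) /eqP.
Qed.

Lemma rep_weight2 (a : nat) : (a < 25)%N -> (norm1 (rep a) <= 2)%N.
Proof.
have light : all (fun q => norm1 q <= 2)%N reps by vm_compute.
exact: (all_nthP qzero light).
Qed.

Lemma rep_weight1 (a : nat) : (a < 9)%N -> (norm1 (rep a) <= 1)%N.
Proof.
have light : all (fun q => norm1 q <= 1)%N (take 9 reps) by vm_compute.
by move=> a9; rewrite /rep -(nth_take qzero a9); apply: (all_nthP qzero light).
Qed.

Definition pos_pair (n : nat) := {p : 'I_n * 'I_n | (p.1 < p.2)%N}.

(* A pattern is: no error, one error (position, one of 24 nonzero
   representatives), or two errors (positions j < l, two units). *)
Definition pattern (n : nat) :=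
  option (('I_n * 'I_24) + (pos_pair n * 'I_8 * 'I_8)).

Definition digit {n : nat} (x : pattern n) (i : 'I_n) : nat :=
  match x with
  | None => 0%N
  | Some (inl (j, a)) => if i == j then a.+1 else 0%N
  | Some (inr (p, a, b)) =>
      if i == (val p).1 then a.+1 else if i == (val p).2 then b.+1 else 0%N
  end.

Definition pattern_vec {n : nat} (x : pattern n) : qvec n :=
  fun i => rep (digit x i).

Lemma pos_pair_neq {n : nat} (p : pos_pair n) : ((val p).2 == (val p).1) = false.
Proof. by apply/negbTE; rewrite neq_ltn (valP p) orbT. Qed.

Lemma digit_lt25 (n : nat) (x : pattern n) (i : 'I_n) : (digit x i < 25)%N.
Proof.
case: x => [[[j a]|[[p a] b]]|] //=; first by case: eqP => // _; rewrite ltnS.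
by case: eqP => _; [|case: eqP => _ //]; [have := ltn_ord a|have := ltn_ord b]; lia.
Qed.

Lemma digit_pair_inj (n : nat) (p q : pos_pair n) (a b c d : 'I_8) :
  (forall i, digit (Some (inr (p, a, b))) i = digit (Some (inr (q, c, d))) i) ->
  (p, a, b) = (q, c, d).
Proof.
case: p q => [[j l] jl] [[j' l'] jl'] /= same.
have lj : (l == j) = false by apply/negbTE; rewrite neq_ltn jl orbT.
have lj' : (l' == j') = false by apply/negbTE; rewrite neq_ltn jl' orbT.
have supp i : ((i == j) || (i == l)) = ((i == j') || (i == l')).
  by move: (same i); case: (i == j); case: (i == l); case: (i == j'); case: (i == l').
have ej : j = j'.
  move: (supp j) (supp j'); rewrite !eqxx /=.
  move=> /esym /orP [/eqP // | /eqP j_l'] /orP [/eqP -> // | /eqP j'_l].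
  by move: jl jl'; rewrite /= j_l' -j'_l; lia.
subst j'; have el : l = l' by move: (supp l); rewrite eqxx lj orbT /= => /esym /eqP.
subst l'; move: (same j) (same l); rewrite eqxx lj eqxx.
move=> [/val_inj ->] [/val_inj ->].
by congr (_, _, _); apply: val_inj.
Qed.

Lemma digit_inj (n : nat) (x y : pattern n) :
  (forall i, digit x i = digit y i) -> x = y.
Proof.
case: x => [[[j a]|[[p a] b]]|]; case: y => [[[j' a']|[[q c] d]]|] //= same.
- have := same j; rewrite eqxx; case: eqP => [<- [/val_inj ->] //|//].
- move: (same (val q).1) (same (val q).2); rewrite !eqxx pos_pair_neq.
  case: eqP => [e1|//]; case: eqP => [e2|//].
  by move: (pos_pair_neq q); rewrite e1 e2 eqxx.
- by have := same j; rewrite eqxx.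
- move: (same (val p).1) (same (val p).2); rewrite !eqxx pos_pair_neq.
  case: eqP => [e1|//]; case: eqP => [e2|//].
  by move: (pos_pair_neq p); rewrite e1 e2 eqxx.
- by move/digit_pair_inj: same => ->.
- by have := same (val p).1; rewrite eqxx.
- by have := same j'; rewrite eqxx.
- by have := same (val q).1; rewrite eqxx.
Qed.

Lemma pattern_vec_sep (n : nat) (x y : pattern n) :
  vcong pi21 (pattern_vec x) (pattern_vec y) -> x = y.
Proof. by move=> xy; apply: digit_inj => i; apply: rep_inj (xy i); apply: digit_lt25. Qed.

Lemma pattern_vec_weight (n : nat) (x : pattern n) :
  (\sum_(i < n) norm1 (pattern_vec x i) <= 2)%N.
Proof.
rewrite /pattern_vec; case: x => [[[j a]|[[p a] b]]|] /=; last by rewrite big1.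
  rewrite (bigD1 j) //= eqxx big1 ?addn0; first by apply: rep_weight2; rewrite ltnS.
  by move=> i /negbTE ->.
rewrite (bigD1 (val p).1) //= eqxx (bigD1 (val p).2) /= ?pos_pair_neq // eqxx.
rewrite big1 ?addn0.
  by rewrite -[2%N]/(1 + 1)%N; apply: leq_add; apply: rep_weight1; rewrite ltnS.
by move=> i /andP [/negbTE -> /negbTE ->].
Qed.

Lemma card_pos_pair (n : nat) : #|{: pos_pair n}| = 'C(n, 2).
Proof.
rewrite card_sig -sum1_card big_mkcond /=.
rewrite -(pair_bigA _ (fun i j : 'I_n => if (i < j)%N then 1 else 0)%N) /=.
elim: n => [|n IH]; first by rewrite big_ord0.
rewrite big_ord_recr /=; under eq_bigr => i _ do rewrite big_ord_recr /=.
rewrite big_split /= IH [X in (_ + X)%N]big1; last first.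
  by move=> j _; rewrite ltnNge -ltnS ltn_ord.
rewrite (eq_bigr (fun _ => 1%N)) => [|i _]; last by rewrite ltn_ord.
by rewrite sum_nat_const card_ord muln1 addn0 binS bin1.
Qed.

(* 1 + 24 n + 64 C(n,2) = 32 n^2 - 8 n + 1 patterns. *)
Lemma card_pattern (n : nat) : #|{: pattern n}| = (32 * n ^ 2 - 8 * n + 1)%N.
Proof.
rewrite card_option card_sum !card_prod !card_ord card_pos_pair.
have := mul_bin_diag n 1; rewrite bin1.
by move: ('C(n, 2)) => c; case: n => [|m] /=; lia.
Qed.

Theorem theorem8 (n k : nat) (C : qvec n -> Prop) :
  linear_code pi21 n k C -> corrects pi21 C 2 ->
  (32 * n ^ 2 - 8 * n + 1 <= (5 ^ 2) ^ (n - k))%N.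
Proof.
move=> [_ C_wd C_grp C_cosets] C_corr.
have := sphere_packing C_wd C_grp C_cosets C_corr pattern_vec (@pattern_vec_weight n)
  (@pattern_vec_sep n).
by rewrite card_pattern.
Qed.
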